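(* Let $(\mathcal C,S,T)$ be a unital association schemoid. (i) For every $\sigma\in S$ there exists a unique $\alpha\in S_0$ with $p^\sigma_{\sigma\alpha}=1$; moreover $p^\sigma_{\sigma\alpha'}=0$ for all $\alpha'\in S_0$ with $\alpha'\neq\alpha$. (ii) For every $\sigma\in S$ there exists a unique $\beta\in S_0$ with $p^\sigma_{\beta\sigma}=1$; moreover $p^\sigma_{\beta'\sigma}=0$ for all $\beta'\in S_0$ with $\beta'\neq\beta$.
   Context: Write $s(f),t(f)$ for source and target. A quasi-schemoid is a pair $(\mathcal C,S)$ with $\mathcal C$ a small category and $S$ a partition of $mor(\mathcal C)$ into nonempty blocks such that for all $\sigma,\tau,\mu\in S$ and $f,g\in\mu$ the sets $\{(a,b)\in\sigma\times\tau: s(a)=t(b), a\circ b=f\}$ and the analogous set for $g$ have equal cardinality, denoted $p^\mu_{\sigma\tau}$ (structure constant). An association schemoid is a triple $(\mathcal C,S,T)$ where $(\mathcal C,S)$ is a quasi-schemoid, every block of $S$ containing an endomorphism consists only of endomorphisms, and $T:\mathcal C\to\mathcal C$ is a contravariant functor with $T^2=\mathrm{id}$ and $\{T(f):f\in\sigma\}\in S$ for all $\sigma\in S$. With $J_0=\{1_x:x\in ob(\mathcal C)\}$, it is unital if every block meeting $J_0$ is contained in $J_0$. $S_0=\{\alpha\in S:\alpha\cap J_0\neq\emptyset\}$. *)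

(* Composition is a total function whose values
   only matter on composable pairs (s(a) = t(b)); [comp a b] is a ∘ b. *)
Record Category := {
  Ob : Type;
  Mor : Type;
  src : Mor -> Ob;
  tgt : Mor -> Ob;
  idm : Ob -> Mor;
  comp : Mor -> Mor -> Mor;
  src_id : forall x, src (idm x) = x;
  tgt_id : forall x, tgt (idm x) = x;
  src_comp : forall a b, src a = tgt b -> src (comp a b) = src b;
  tgt_comp : forall a b, src a = tgt b -> tgt (comp a b) = tgt a;
  comp_id_l : forall f, comp (idm (tgt f)) f = f;
  comp_id_r : forall f, comp f (idm (src f)) = f;
  comp_assoc : forall a b c, src a = tgt b -> src b = tgt c ->
      comp a (comp b c) = comp (comp a b) c
}.

Arguments src {_}. Arguments tgt {_}. Arguments idm {_}. Arguments comp {_}.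

Definition equipotent (A B : Type) : Prop :=
  exists h : A -> B, (forall x y, h x = h y -> x = y) /\ (forall y, exists x, h x = y).

(* A partition S of mor(C) into nonempty blocks, encoded by a block type
   [Blk] and a surjective labelling [cls] : each morphism lies in exactly one
   block, and blocks are the (nonempty) fibres of [cls]. *)
Record Partition (C : Category) := {
  Blk : Type;
  cls : Mor C -> Blk;
  cls_surj : forall s : Blk, exists f, cls f = s
}.

Arguments Blk {_}. Arguments cls {_}.

Definition PairSet {C : Category} (S : Partition C) (sigma tau : Blk S) (f : Mor C) : Type :=
  { ab : Mor C * Mor C |
    cls S (fst ab) = sigma /\ cls S (snd ab) = tau /\
    src (fst ab) = tgt (snd ab) /\ comp (fst ab) (snd ab) = f }.

Definition is_quasi_schemoid {C : Category} (S : Partition C) : Prop :=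
  forall sigma tau mu : Blk S, forall f g : Mor C,
    cls S f = mu -> cls S g = mu ->
    equipotent (PairSet S sigma tau f) (PairSet S sigma tau g).

(* "p^mu_{sigma tau} = n" (a finite cardinal): the common cardinality of the
   sets PairSet S sigma tau f, f in mu, equals n. *)
Definition struct_const_eq {C : Category} (S : Partition C) (sigma tau mu : Blk S) (n : nat) : Prop :=
  forall f, cls S f = mu -> equipotent (PairSet S sigma tau f) {k : nat | k < n}.

Record ContraInvolution (C : Category) := {
  Tob : Ob C -> Ob C;
  Tmor : Mor C -> Mor C;
  T_src : forall f, src (Tmor f) = Tob (tgt f);
  T_tgt : forall f, tgt (Tmor f) = Tob (src f);
  T_id : forall x, Tmor (idm x) = idm (Tob x);
  T_comp : forall a b, src a = tgt b -> Tmor (comp a b) = comp (Tmor b) (Tmor a);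
  Tob_inv : forall x, Tob (Tob x) = x;
  Tmor_inv : forall f, Tmor (Tmor f) = f
}.

Arguments Tob {_}. Arguments Tmor {_}.

Definition is_association_schemoid {C : Category} (S : Partition C) (T : ContraInvolution C) : Prop :=
  is_quasi_schemoid S /\
  (forall sigma : Blk S, (exists f, cls S f = sigma /\ src f = tgt f) ->
       forall f, cls S f = sigma -> src f = tgt f) /\
  (forall sigma : Blk S, exists sigma' : Blk S,
       forall g, cls S g = sigma' <-> exists f, cls S f = sigma /\ g = Tmor T f).

Definition in_S0 {C : Category} (S : Partition C) (sigma : Blk S) : Prop :=
  exists x, cls S (idm x) = sigma.

Definition is_unital {C : Category} (S : Partition C) : Prop :=
  forall sigma : Blk S, in_S0 S sigma -> forall f, cls S f = sigma -> exists x, f = idm x.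

From Stdlib Require Import ProofIrrelevance Lia.

(* In a unital quasi-schemoid a block alpha of S_0 consists of
   identities only, so a pair (a, b) with b in alpha and a o b = g must be
   (g, 1_{src g}); hence the set counted by p^sigma_{sigma alpha} over g is a
   subsingleton, inhabited exactly when alpha is the block of 1_{src g}.  The
   quasi-schemoid condition makes these cardinalities independent of g in
   sigma, so the block of 1_{src g} does not depend on g, and it is the unique
   alpha in S_0 with p^sigma_{sigma alpha} = 1, all others giving 0. *)

Lemma equipotent_one (A : Type) (a : A) :
  (forall x y : A, x = y) -> equipotent A {k : nat | k < 1}.
Proof.
  intros Hsub. exists (fun _ => exist _ 0 (le_n 1)). split.
  - intros x y _. apply Hsub.
  - intros [k Hk]. exists a.
    assert (k = 0) by lia. subst k. f_equal. apply proof_irrelevance.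
Qed.

Lemma equipotent_zero (A : Type) : (A -> False) -> equipotent A {k : nat | k < 0}.
Proof.
  intros Hempty. exists (fun x => False_rect _ (Hempty x)). split.
  - intros x. destruct (Hempty x).
  - intros [k Hk]. lia.
Qed.

Lemma equipotent_one_inhabited (A : Type) : equipotent A {k : nat | k < 1} -> inhabited A.
Proof.
  intros [h [_ Hsurj]]. destruct (Hsurj (exist _ 0 (le_n 1))) as [x _]. exact (inhabits x).
Qed.

Section UnitBlock.

Variable C : Category.
Variable S : Partition C.

Definition const_count (P : Blk S -> Mor C -> Type) (mu alpha : Blk S) (n : nat) : Prop :=
  forall g, cls S g = mu -> equipotent (P alpha g) {k : nat | k < n}.

(* The abstract counting argument.  [P alpha g] stands for the pairs counted by
   a structure constant with unit block alpha over g, and [unit_of g] for the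
   block of the identity that g composes with. *)
Variable sigma : Blk S.
Variable P : Blk S -> Mor C -> Type.
Variable unit_of : Mor C -> Blk S.
Hypothesis unit_of_S0 : forall g, in_S0 S (unit_of g).
Hypothesis P_subsingleton : forall alpha g (x y : P alpha g), in_S0 S alpha -> x = y.
Hypothesis P_unit_block : forall alpha g, in_S0 S alpha -> P alpha g -> alpha = unit_of g.
Hypothesis P_witness : forall g, cls S g = sigma -> P (unit_of g) g.
Hypothesis P_const : forall alpha f g, cls S f = sigma -> cls S g = sigma ->
  equipotent (P alpha f) (P alpha g).

Lemma unit_of_const f g : cls S f = sigma -> cls S g = sigma -> unit_of g = unit_of f.
Proof.
  intros Hf Hg. destruct (P_const (unit_of f) f g Hf Hg) as [h _].
  symmetry. exact (P_unit_block _ _ (unit_of_S0 f) (h (P_witness f Hf))).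
Qed.

Lemma unit_block_unique :
  exists alpha : Blk S,
    in_S0 S alpha /\ const_count P sigma alpha 1 /\
    (forall alpha', in_S0 S alpha' -> const_count P sigma alpha' 1 -> alpha' = alpha) /\
    (forall alpha', in_S0 S alpha' -> alpha' <> alpha -> const_count P sigma alpha' 0).
Proof.
  destruct (cls_surj _ S sigma) as [f Hf].
  exists (unit_of f). split; [apply unit_of_S0 | split; [| split]].
  - intros g Hg. rewrite <- (unit_of_const f g Hf Hg).
    apply (equipotent_one _ (P_witness g Hg)).
    intros x y. apply P_subsingleton, unit_of_S0.
  - intros alpha' HS0 Hone.
    destruct (equipotent_one_inhabited _ (Hone f Hf)) as [x].
    exact (P_unit_block _ _ HS0 x).
  - intros alpha' HS0 Hne g Hg. apply equipotent_zero. intros x.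
    apply Hne. rewrite (P_unit_block _ _ HS0 x). apply unit_of_const; assumption.
Qed.

End UnitBlock.

Arguments const_count {C} S P mu alpha n.

Section UnitPairs.

Variable C : Category.
Variable S : Partition C.
Hypothesis HU : is_unital S.

Lemma pair_set_eq sigma tau g (x y : PairSet S sigma tau g) :
  proj1_sig x = proj1_sig y -> x = y.
Proof.
  destruct x, y. simpl. intros ->. f_equal. apply proof_irrelevance.
Qed.

Lemma S0_identity a : in_S0 S (cls S a) -> exists x, a = idm x.
Proof. intros H. exact (HU _ H a eq_refl). Qed.

Lemma right_unit_pair sigma alpha g (p : PairSet S sigma alpha g) :
  in_S0 S alpha -> proj1_sig p = (g, idm (src g)).
Proof.
  destruct p as [[a b] [Ha [Hb [Hab Hg]]]]; simpl in *. intros HS0. subst alpha.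
  destruct (S0_identity b HS0) as [x ->].
  rewrite tgt_id in Hab. subst x. rewrite comp_id_r in Hg. subst g. reflexivity.
Qed.

Lemma left_unit_pair sigma beta g (p : PairSet S beta sigma g) :
  in_S0 S beta -> proj1_sig p = (idm (tgt g), g).
Proof.
  destruct p as [[a b] [Ha [Hb [Hab Hg]]]]; simpl in *. intros HS0. subst beta.
  destruct (S0_identity a HS0) as [x ->].
  rewrite src_id in Hab. subst x. rewrite comp_id_l in Hg. subst g. reflexivity.
Qed.

Hypothesis HQ : is_quasi_schemoid S.

Lemma right_unit_block sigma :
  exists alpha : Blk S,
    in_S0 S alpha /\ const_count S (PairSet S sigma) sigma alpha 1 /\
    (forall alpha', in_S0 S alpha' ->
       const_count S (PairSet S sigma) sigma alpha' 1 -> alpha' = alpha) /\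
    (forall alpha', in_S0 S alpha' -> alpha' <> alpha ->
       const_count S (PairSet S sigma) sigma alpha' 0).
Proof.
  apply (unit_block_unique C S sigma (PairSet S sigma) (fun g => cls S (idm (src g)))).
  - intros g. exists (src g). reflexivity.
  - intros alpha g x y HS0. apply pair_set_eq.
    rewrite (right_unit_pair _ _ _ x HS0), (right_unit_pair _ _ _ y HS0). reflexivity.
  - intros alpha g HS0 p. pose proof (right_unit_pair _ _ _ p HS0) as Hp.
    destruct p as [ab [? [Hb ?]]]; simpl in Hp. subst ab. symmetry. exact Hb.
  - intros g Hg. exists (g, idm (src g)). simpl. rewrite tgt_id, comp_id_r. auto.
  - intros alpha f g Hf Hg. exact (HQ sigma alpha sigma f g Hf Hg).
Qed.

Lemma left_unit_block sigma :
  exists beta : Blk S,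
    in_S0 S beta /\ const_count S (fun b => PairSet S b sigma) sigma beta 1 /\
    (forall beta', in_S0 S beta' ->
       const_count S (fun b => PairSet S b sigma) sigma beta' 1 -> beta' = beta) /\
    (forall beta', in_S0 S beta' -> beta' <> beta ->
       const_count S (fun b => PairSet S b sigma) sigma beta' 0).
Proof.
  apply (unit_block_unique C S sigma (fun b => PairSet S b sigma)
           (fun g => cls S (idm (tgt g)))).
  - intros g. exists (tgt g). reflexivity.
  - intros beta g x y HS0. apply pair_set_eq.
    rewrite (left_unit_pair _ _ _ x HS0), (left_unit_pair _ _ _ y HS0). reflexivity.
  - intros beta g HS0 p. pose proof (left_unit_pair _ _ _ p HS0) as Hp.
    destruct p as [ab [Ha ?]]; simpl in Hp. subst ab. symmetry. exact Ha.
  - intros g Hg. exists (idm (tgt g), g). simpl. rewrite src_id, comp_id_l. auto.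
  - intros beta f g Hf Hg. exact (HQ beta sigma sigma f g Hf Hg).
Qed.

End UnitPairs.

(* Lemma 4.2: each block sigma has a unique right and a unique left unit block
   in S_0; only the quasi-schemoid condition and unitality are needed. *)
Theorem lemma4p2 (C : Category) (S : Partition C) (T : ContraInvolution C)
  (HS : is_association_schemoid S T) (HU : is_unital S) :
  (forall sigma : Blk S,
     exists alpha : Blk S,
       in_S0 S alpha /\ struct_const_eq S sigma alpha sigma 1 /\
       (forall alpha' : Blk S, in_S0 S alpha' ->
          struct_const_eq S sigma alpha' sigma 1 -> alpha' = alpha) /\
       (forall alpha' : Blk S, in_S0 S alpha' -> alpha' <> alpha ->
          struct_const_eq S sigma alpha' sigma 0)) /\
  (forall sigma : Blk S,
     exists beta : Blk S,
       in_S0 S beta /\ struct_const_eq S beta sigma sigma 1 /\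
       (forall beta' : Blk S, in_S0 S beta' ->
          struct_const_eq S beta' sigma sigma 1 -> beta' = beta) /\
       (forall beta' : Blk S, in_S0 S beta' -> beta' <> beta ->
          struct_const_eq S beta' sigma sigma 0)).
Proof.
  destruct HS as [HQ _].
  split; intros sigma.
  - exact (right_unit_block C S HU HQ sigma).
  - exact (left_unit_block C S HU HQ sigma).
Qed.
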